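(* Let $R$ be a ring with $p\in J(R)$ for some prime $p$, and let $G$ be a locally finite $p$-group. Then $\Delta(R)G\subseteq\Delta(RG)$, i.e. every element $\sum_{g\in G}a_g g\in RG$ with all coefficients $a_g\in\Delta(R)$ lies in $\Delta(RG)$.
   Context: All rings are associative with identity; $J(R)$ is the Jacobson radical, $U(R)$ the group of units. $\Delta(R)=\{x\in R: x+u\in U(R)\text{ for all }u\in U(R)\}$. A group is locally finite if every finitely generated subgroup is finite. $RG$ denotes the group ring. *)

From HB Require Import structures.
From mathcomp Require Import all_boot all_order all_algebra.
From mathcomp Require Import finmap.
Set Implicit Arguments. Unset Strict Implicit. Unset Printing Implicit Defensive.
Import GRing.Theory.
Local Open Scope ring_scope.


Section RingNotions.
Variable R : pzRingType.

Definition is_unit (x : R) : Prop := exists y : R, x * y = 1 /\ y * x = 1.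

Definition Delta (x : R) : Prop := forall u : R, is_unit u -> is_unit (x + u).

Definition left_ideal (I : R -> Prop) : Prop :=
  [/\ I 0, (forall x y, I x -> I y -> I (x - y)) & (forall r x, I x -> I (r * x))].

Definition maximal_left_ideal (I : R -> Prop) : Prop :=
  [/\ left_ideal I, ~ I 1 &
      forall Jd : R -> Prop, left_ideal Jd -> ~ Jd 1 ->
        (forall x, I x -> Jd x) -> forall x, Jd x -> I x].

Definition jacobson (x : R) : Prop :=
  forall I : R -> Prop, maximal_left_ideal I -> I x.
End RingNotions.

Definition is_group (G : Type) (gmul : G -> G -> G) (gone : G) (ginv : G -> G)
  : Prop :=
  [/\ forall x y z, gmul x (gmul y z) = gmul (gmul x y) z,
      forall x, gmul gone x = x, forall x, gmul x gone = x,
      forall x, gmul (ginv x) x = gone & forall x, gmul x (ginv x) = gone].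

Section Groups.
Variables (G : choiceType) (gmul : G -> G -> G) (gone : G) (ginv : G -> G).

Definition is_subgroup (H : G -> Prop) : Prop :=
  [/\ H gone, (forall x y, H x -> H y -> H (gmul x y)) &
      (forall x, H x -> H (ginv x))].

Definition gen_subgroup (s : seq G) (x : G) : Prop :=
  forall H : G -> Prop, is_subgroup H -> (forall y, y \in s -> H y) -> H x.

Definition finite_subset (A : G -> Prop) : Prop :=
  exists t : seq G, forall x, A x -> x \in t.

Definition locally_finite : Prop :=
  forall s : seq G, finite_subset (gen_subgroup s).

Definition gpow (x : G) (n : nat) : G := iter n (gmul x) gone.

Definition p_group (p : nat) : Prop :=
  forall x : G, exists n : nat, gpow x (p ^ n) = gone.
End Groups.

Section GroupRing.
Variables (R : pzRingType) (G : choiceType) (gmul : G -> G -> G) (gone : G).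

Local Notation grpring := {fsfun G -> R with (0 : R)}.

Definition gr_one : grpring := [fsfun g in [fset gone]%fset => 1 | 0].

Definition gr_add (a b : grpring) : grpring :=
  [fsfun g in (finsupp a `|` finsupp b)%fset => a g + b g | 0].

Definition gr_mul (a b : grpring) : grpring :=
  [fsfun g in [fset gmul h k | h in finsupp a, k in finsupp b]%fset =>
     \sum_(h <- finsupp a) \sum_(k <- finsupp b | gmul h k == g) a h * b k | 0].

Definition gr_is_unit (x : grpring) : Prop :=
  exists y : grpring, gr_mul x y = gr_one /\ gr_mul y x = gr_one.

Definition gr_Delta (x : grpring) : Prop :=
  forall u : grpring, gr_is_unit u -> gr_is_unit (gr_add x u).
End GroupRing.
Notation grpring R G := {fsfun G -> R with (0 : R)}.

From HB Require Import structures.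
From mathcomp Require Import all_boot all_order all_algebra all_fingroup all_solvable.
From mathcomp Require Import finmap.
From mathcomp Require boolp classical_sets.
Set Implicit Arguments. Unset Strict Implicit. Unset Printing Implicit Defensive.
Import GRing.Theory.
Local Open Scope ring_scope.

(* Choose a finite subgroup [H] of [G] carrying the supports of [x], a unit [u]
   and its inverse; [H] is a finite [p]-group. In [RH] an element is a unit as
   soon as its augmentation is a unit of [R]; the augmentation of [x + u] is
   [sum a_g + aug u], with [sum a_g] in [Delta R] and [aug u] a unit.
   For the criterion it suffices that [1 - w] is left invertible when [aug w = 0].
   Otherwise [1 - w] lies in a maximal left ideal [M] of [RH], which contains [p]
   by Nakayama's lemma ([RH] is a finitely generated [R]-module). For [v] outside
   [M], the [Z/p]-combinations of the translates [h v] modulo [M] form a finite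
   [p]-group acted on by [H], so counting fixed points yields [v0] outside [M]
   with [(h - 1) v0] in [M] for all [h]. Then the augmentation ideal maps [v0]
   into [M], and writing [1 = m + t v0] gives [w = w m + (w t) v0] in [M], so
   [1] is in [M]. *)

Section LeftIdeals.
Variable S : pzRingType.
Implicit Types (I M : S -> Prop) (x w : S).

Lemma left_idealD I : left_ideal I -> forall x y, I x -> I y -> I (x + y).
Proof.
case=> I0 IB _ x y Ix Iy; have := IB x (0 - y) Ix (IB 0 y I0 Iy).
by rewrite sub0r opprK.
Qed.

Lemma left_idealM I : left_ideal I -> forall r x, I x -> I (r * x).
Proof. by case. Qed.

Lemma left_ideal_sum I (T : Type) (s : seq T) (F : T -> S) :
  left_ideal I -> (forall i, I (F i)) -> I (\sum_(i <- s) F i).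
Proof.
move=> LI IF; elim: s => [|a s IH]; first by rewrite big_nil; case: LI.
by rewrite big_cons; apply: left_idealD.
Qed.

Definition left_multiples w x := exists a, x = a * w.

Lemma left_ideal_multiples w : left_ideal (left_multiples w).
Proof.
split; first by exists 0; rewrite mul0r.
  by move=> _ _ [a ->] [b ->]; exists (a - b); rewrite mulrBl.
by move=> r _ [a ->]; exists (r * a); rewrite mulrA.
Qed.

Lemma maximal_left_ideal_exists I : left_ideal I -> ~ I 1 ->
  exists M, maximal_left_ideal M /\ (forall x, I x -> M x).
Proof.
move=> LI nI1.
(* [Zorn_bigcup] also needs an upper bound for the empty chain, whose union is
   the empty set; hence the extra member of [P]. *)
pose P (X : S -> Prop) :=
  X = (fun _ => False) \/ [/\ left_ideal X, ~ X 1 & forall x, I x -> X x].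
have PX X x : P X -> X x -> [/\ left_ideal X, ~ X 1 & forall x, I x -> X x].
  by case=> [->|].
have [A [PA Amax]] : exists A, P A /\ forall B, classical_sets.proper A B -> ~ P B.
  apply: classical_sets.Zorn_bigcup => F FP Ftot.
  case: (boolp.pselect (exists X, F X /\ exists x, X x)) => [[X0 [FX0 [x0 X0x0]]]|nex].
  - right.
    have Fid X x : F X -> X x -> [/\ left_ideal X, ~ X 1 & forall x, I x -> X x].
      by move=> FX; exact: PX (FP _ FX).
    have [LX0 _ IX0] := Fid _ _ FX0 X0x0.
    split.
    + split; first by exists X0 => //; case: LX0.
        move=> x y [X1 FX1 X1x] [X2 FX2 X2y].
        have [[_ IB1 _] _ _] := Fid _ _ FX1 X1x.
        have [[_ IB2 _] _ _] := Fid _ _ FX2 X2y.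
        case: (Ftot _ _ FX1 FX2) => sub.
        * by exists X2 => //; exact: IB2 (sub _ X1x) X2y.
        * by exists X1 => //; exact: IB1 X1x (sub _ X2y).
      move=> r x [X FX Xx]; exists X => //.
      by have [[_ _ IM] _ _] := Fid _ _ FX Xx; exact: IM.
    + by case=> X FX X1; have [_ nX1 _] := Fid _ _ FX X1.
    + by move=> x Ix; exists X0 => //; exact: IX0.
  - left; apply: boolp.funext => x; apply: boolp.propext; split=> // [[X FX Xx]].
    by apply: nex; exists X; split=> //; exists x.
case: PA => [A0|[LA nA1 IA]].
  exfalso; apply: (Amax I); last by right.
  rewrite A0; split=> //; by move=> /(_ 0); case: LI => I0 _ _ /(_ I0).
exists A; split=> //; split=> // J LJ nJ1 AJ.
apply: boolp.contrapT => nJA; apply: (Amax J); last by right; split=> // x /IA /AJ.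
by split=> // JA; apply: nJA => x /JA.
Qed.

Lemma maximal_left_ideal_cover M a : maximal_left_ideal M -> ~ M a ->
  exists m s, M m /\ 1 = m + s * a.
Proof.
move=> [LM nM1 Mmax] nMa.
pose J x := exists m s, M m /\ x = m + s * a.
have LJ : left_ideal J.
  split; first by exists 0, 0; split; [case: LM | rewrite mul0r addr0].
    move=> _ _ [m1 [s1 [Mm1 ->]]] [m2 [s2 [Mm2 ->]]].
    exists (m1 - m2), (s1 - s2); split; first by case: LM => _ MB _; exact: MB.
    by rewrite mulrBl opprD addrACA.
  move=> r _ [m [s [Mm ->]]]; exists (r * m), (r * s).
  by rewrite mulrDr mulrA; split=> //; exact: left_idealM.
apply: boolp.contrapT => nJ1; apply: nMa; apply: (Mmax J LJ nJ1).
  by move=> x Mx; exists x, 0; rewrite mul0r addr0.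
by exists 0, 1; split; [case: LM | rewrite mul1r add0r].
Qed.

Lemma not_left_invertible_maximal w : ~ (exists a, a * w = 1) ->
  exists M, maximal_left_ideal M /\ M w.
Proof.
move=> ninv; have nW1 : ~ left_multiples w 1 by case=> a /esym e; apply: ninv; exists a.
have [M [MM WM]] := maximal_left_ideal_exists (left_ideal_multiples w) nW1.
by exists M; split=> //; apply: WM; exists 1; rewrite mul1r.
Qed.

(* A one-sided inverse [a] of [1 - w] is itself of the form [1 - w'] with [w'] in
   the ideal, so it has a left inverse too, which must be [1 - w]. *)
Lemma left_quasi_regular_unit I : (forall r x, I x -> I (r * x)) ->
    (forall w, I w -> exists a, a * (1 - w) = 1) ->
  forall w, I w -> is_unit (1 - w).
Proof.
move=> IM Linv w Iw; have [a ha] := Linv w Iw.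
have ea : a = 1 - (- a) * w by rewrite mulNr opprK -{1}ha mulrBr mulr1 subrK.
have [b hb] := Linv _ (IM (- a) w Iw); rewrite -ea in hb.
have eb : b = 1 - w.
  by have := congr1 (fun z => b * z) ha; rewrite /= mulrA hb mul1r mulr1.
by exists a; split=> //; rewrite -eb.
Qed.

End LeftIdeals.

Lemma jacobson_unit (R : pzRingType) (x : R) :
  jacobson x -> forall r, is_unit (1 - r * x).
Proof.
move=> Jx r; apply: (left_quasi_regular_unit (I := left_multiples x)).
- by move=> s _ [a ->]; exists (s * a); rewrite mulrA.
- move=> _ [a ->]; apply: boolp.contrapT.
  move=> /not_left_invertible_maximal [M [MM Ma]]; have [LM nM1 _] := MM.
  apply: nM1; rewrite -(subrK (a * x) 1).
  by apply: left_idealD => //; apply: left_idealM => //; exact: Jx.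
- by exists r.
Qed.

Lemma is_unit_rmorph (R S : pzRingType) (f : {rmorphism R -> S}) x :
  is_unit x -> is_unit (f x).
Proof. by case=> y [xy yx]; exists (f y); rewrite -!rmorphM xy yx rmorph1. Qed.

Lemma Delta_sum (R : pzRingType) (I : Type) (s : seq I) (F : I -> R) :
  (forall i, Delta (F i)) -> Delta (\sum_(i <- s) F i).
Proof.
move=> DF; elim: s => [|i s IH]; first by move=> u; rewrite big_nil add0r.
by move=> u uu; rewrite big_cons -addrA; apply/DF/IH.
Qed.

Section FiniteGroupRing.
Variables (R : pzRingType) (gT : finGroupType).

Definition gring := {ffun gT -> R}.
HB.instance Definition _ := GRing.Zmodule.on gring.

Definition gring_mul (a b : gring) : gring :=
  [ffun g => \sum_h a h * b (h^-1 * g)%g].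
Definition gring_one : gring := [ffun g => (g == 1%g)%:R].

Lemma gring_mulA : associative gring_mul.
Proof.
move=> a b c; apply/ffunP => g; rewrite !ffunE.
under eq_bigr do rewrite ffunE mulr_sumr.
under [RHS]eq_bigr do rewrite ffunE mulr_suml.
rewrite [RHS]exchange_big /=; apply: eq_bigr => h _.
rewrite (reindex_inj (mulgI h^-1)%g) /=; apply: eq_bigr => k _.
by rewrite mulrA invMg invgK !mulgA mulgK.
Qed.

Lemma gring_mul1r : left_id gring_one gring_mul.
Proof.
move=> b; apply/ffunP => g; rewrite ffunE (bigD1 1%g) //= big1 => [|h /negbTE h1].
  by rewrite ffunE eqxx mul1r invg1 mul1g addr0.
by rewrite ffunE h1 mul0r.
Qed.

Lemma gring_mulr1 : right_id gring_one gring_mul.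
Proof.
move=> a; apply/ffunP => g; rewrite ffunE (bigD1 g) //= big1 => [|h hg].
  by rewrite ffunE mulVg eqxx mulr1 addr0.
by rewrite ffunE -eq_mulVg1 (negbTE hg) mulr0.
Qed.

Lemma gring_mulDl : left_distributive gring_mul +%R.
Proof.
move=> a b c; apply/ffunP => g; rewrite !ffunE -big_split /=.
by apply: eq_bigr => h _; rewrite ffunE mulrDl.
Qed.

Lemma gring_mulDr : right_distributive gring_mul +%R.
Proof.
move=> a b c; apply/ffunP => g; rewrite !ffunE -big_split /=.
by apply: eq_bigr => h _; rewrite ffunE mulrDr.
Qed.

HB.instance Definition _ := GRing.Zmodule_isPzRing.Build gring
  gring_mulA gring_mul1r gring_mulr1 gring_mulDl gring_mulDr.

Lemma gring_mulE (a b : gring) g : (a * b) g = \sum_h a h * b (h^-1 * g)%g.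
Proof. by rewrite ffunE. Qed.

Lemma gring_oneE g : (1 : gring) g = (g == 1%g)%:R.
Proof. by rewrite ffunE. Qed.

Definition gconst (r : R) : gring := [ffun g => if g == 1%g then r else 0].
Definition gelem (g : gT) : gring := [ffun h => (h == g)%:R].

Lemma gconst_mull r (a : gring) : gconst r * a = [ffun g => r * a g].
Proof.
apply/ffunP => g; rewrite gring_mulE !ffunE (bigD1 1%g) //= big1 => [|h /negbTE h1].
  by rewrite ffunE eqxx invg1 mul1g addr0.
by rewrite ffunE h1 mul0r.
Qed.

Lemma gconst_mulr (a : gring) r : a * gconst r = [ffun g => a g * r].
Proof.
apply/ffunP => g; rewrite gring_mulE !ffunE (bigD1 g) //= big1 => [|h hg].
  by rewrite ffunE mulVg eqxx addr0.
by rewrite ffunE -eq_mulVg1 (negbTE hg) mulr0.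
Qed.

Lemma gconst_is_zmod_morphism : zmod_morphism gconst.
Proof. by move=> r s; apply/ffunP => g; rewrite !ffunE; case: eqP; rewrite ?subr0. Qed.

Lemma gconst_is_monoid_morphism : monoid_morphism gconst.
Proof.
split; first by apply/ffunP => g; rewrite gring_oneE ffunE; case: eqP.
move=> r s; rewrite gconst_mull; apply/ffunP => g.
by rewrite !ffunE; case: eqP; rewrite ?mulr0.
Qed.

HB.instance Definition _ := GRing.isZmodMorphism.Build R gring gconst
  gconst_is_zmod_morphism.
HB.instance Definition _ := GRing.isMonoidMorphism.Build R gring gconst
  gconst_is_monoid_morphism.

Lemma gelemM g h : gelem g * gelem h = gelem (g * h)%g.
Proof.
apply/ffunP => x; rewrite gring_mulE ffunE (bigD1 g) //= big1 => [|k /negbTE kg].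
  by rewrite !ffunE eqxx mul1r addr0 -(inj_eq (mulgI g)) mulKVg.
by rewrite ffunE kg mul0r.
Qed.

Lemma gconst_gelemC r g : GRing.comm (gconst r) (gelem g).
Proof.
rewrite /GRing.comm gconst_mull gconst_mulr.
by apply/ffunP => h; rewrite !ffunE; case: eqP; rewrite ?mulr0 ?mul0r ?mulr1 ?mul1r.
Qed.

Lemma gelem1 : gelem 1%g = 1.
Proof. by apply/ffunP => g; rewrite gring_oneE ?ffunE. Qed.

Lemma gring_decomp (a : gring) : a = \sum_g gconst (a g) * gelem g.
Proof.
apply/ffunP => x; rewrite sum_ffunE (bigD1 x) //= big1 => [|g gx].
  by rewrite gconst_mull !ffunE eqxx mulr1 addr0.
by rewrite gconst_mull !ffunE eq_sym (negbTE gx) mulr0.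
Qed.

Definition augment (a : gring) : R := \sum_g a g.

Lemma augment_is_zmod_morphism : zmod_morphism augment.
Proof.
by move=> a b; rewrite /augment -sumrB; apply: eq_bigr => g _; rewrite !ffunE.
Qed.

Lemma augment_is_monoid_morphism : monoid_morphism augment.
Proof.
split.
  rewrite /augment (bigD1 1%g) //= big1 => [|h /negbTE h1]; last by rewrite gring_oneE h1.
  by rewrite gring_oneE eqxx addr0.
move=> a b; rewrite /augment mulr_suml; under eq_bigr do rewrite gring_mulE.
rewrite exchange_big /=; apply: eq_bigr => h _; rewrite mulr_sumr.
by rewrite (reindex_inj (mulgI h)) /=; apply: eq_bigr => k _; rewrite mulKg.
Qed.

HB.instance Definition _ := GRing.isZmodMorphism.Build gring R augment
  augment_is_zmod_morphism.
HB.instance Definition _ := GRing.isMonoidMorphism.Build gring R augment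
  augment_is_monoid_morphism.

Lemma augment_const r : augment (gconst r) = r.
Proof.
rewrite /augment (bigD1 1%g) //= big1 => [|h /negbTE h1]; last by rewrite ffunE h1.
by rewrite ffunE eqxx addr0.
Qed.

End FiniteGroupRing.
Arguments gconst {R gT}.
Arguments gelem {R gT}.
Arguments augment {R gT}.

Section Nakayama.
Variables (R S : pzRingType) (c : {rmorphism R -> S}) (I : Type) (gen : I -> S).
Variables (j : R) (M : S -> Prop).
Hypothesis LM : left_ideal M.
Hypothesis j_quasi_regular : forall r, exists u, u * (1 - j * r) = 1.
Hypothesis cover_j : forall z, exists m z', M m /\ z = m + c j * z'.

Let span (s : seq I) z :=
  exists m (f : I -> R), M m /\ z = m + \sum_(i <- s) c (f i) * gen i.

Let span_ideal s m : M m -> span s m.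
Proof.
by exists m, (fun=> 0); split=> //; rewrite big1 ?addr0 // => i _; rewrite rmorph0 mul0r.
Qed.

Let spanD s z1 z2 : span s z1 -> span s z2 -> span s (z1 + z2).
Proof.
move=> [m1 [f1 [Mm1 ->]]] [m2 [f2 [Mm2 ->]]].
exists (m1 + m2), (fun i => f1 i + f2 i); split; first exact: left_idealD.
by rewrite addrACA -big_split; congr (_ + _); apply: eq_bigr => i _; rewrite rmorphD mulrDl.
Qed.

Let spanZ s r z : span s z -> span s (c r * z).
Proof.
move=> [m [f [Mm ->]]]; exists (c r * m), (fun i => r * f i).
split; first exact: left_idealM.
by rewrite mulrDr mulr_sumr; congr (_ + _); apply: eq_bigr => i _; rewrite rmorphM mulrA.
Qed.

Let span_cons i s : (forall z, span (i :: s) z) -> forall z, span s z.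
Proof.
move=> span_is.
have span_i : span s (gen i).
  have [m [z' [Mm ez]]] := cover_j (gen i).
  have [m' [f [Mm' ez']]] := span_is z'; rewrite big_cons in ez'.
  set T := \sum_(k <- s) _ in ez'.
  have [u hu] := j_quasi_regular (f i).
  have -> : gen i = c u * ((m + c j * m') + c j * T).
    rewrite -[LHS]mul1r -(rmorph1 c) -hu rmorphM -mulrA; congr (_ * _).
    rewrite rmorphB rmorph1 rmorphM mulrBl mul1r -mulrA {1}ez ez' !mulrDr.
    by rewrite addrA [c j * (_ * gen i) + _]addrC addrA addrK.
  apply: spanZ; apply: spanD.
    by apply: span_ideal; apply: left_idealD => //; exact: left_idealM.
  by apply: spanZ; exists 0, f; rewrite add0r; case: LM.
move=> z; have [m [f [Mm ->]]] := span_is z; rewrite big_cons addrCA.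
apply: spanD; first exact: spanZ.
by apply: spanD; [exact: span_ideal | exists 0, f; rewrite add0r; case: LM].
Qed.

Lemma nakayama_left_ideal (s : seq I) :
  (forall z, exists m (f : I -> R), M m /\ z = m + \sum_(i <- s) c (f i) * gen i) ->
  M 1.
Proof.
elim: s => [|i s IH] span_s; last by apply: IH; exact: span_cons span_s.
by have [m [f [Mm]]] := span_s 1; rewrite big_nil addr0 => ->.
Qed.

End Nakayama.

Section FixedCoset.
Local Open Scope group_scope.
Variables (aT rT : finGroupType) (p : nat) (to : {action aT &-> rT}) (K : {group rT}).
Hypotheses (p_pr : prime p) (pg_aT : p.-group [set: aT]) (pg_rT : p.-group [set: rT]).
Hypothesis to_morph : forall x y a, to (x * y) a = to x a * to y a.
Hypothesis K_stable : forall x a, x \in K -> to x a \in K.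
Hypothesis K_proper : ~~ ([set: rT] \subset K).

Lemma act_rcoset x a : (to^*)%act (K :* x) a = K :* to x a.
Proof.
apply/setP => y; apply/imsetP/idP => [[z]|].
  by rewrite !mem_rcoset => zK ->; rewrite -(mulgKV x z) to_morph mulgK K_stable.
rewrite mem_rcoset => yK; exists (to (y * (to x a)^-1) a^-1 * x).
  by rewrite mem_rcoset mulgK K_stable.
by rewrite to_morph -actM mulVg act1 mulgKV.
Qed.

Lemma acts_rcosets : [acts [set: aT], on rcosets K [set: rT] | to^*].
Proof.
apply/actsP => a _ B; apply/rcosetsP/rcosetsP => [[x _ eB]|[x _ ->]].
  exists (to x a^-1); first by rewrite inE.
  by rewrite -act_rcoset -eB -(actM to^*) mulgV (act1 to^*).
by exists (to x a); rewrite ?inE ?act_rcoset.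
Qed.

(* The rcosets of [K] form a set of [p]-power size > 1, so the [p]-group [aT]
   fixes a number of them divisible by [p]; [K] is one, hence there is another. *)
Lemma exists_fixed_rcoset :
  exists2 x, x \notin K & forall a, to x a * x^-1 \in K.
Proof.
set X := rcosets K [set: rT].
have pX : (p %| #|[set: rT] : K|)%N.
  have [k ek] := p_natP (pnat_dvd (dvdn_indexg [set: rT]%G K) pg_rT).
  have : (1 < #|[set: rT] : K|)%N by rewrite indexg_gt1.
  by case: k ek => [->//|k ->]; rewrite expnS dvdn_mulr.
set F := 'Fix_(X | to^*)([set: aT]).
have pF : (p %| #|F|)%N by rewrite /dvdn -pgroup_fix_mod // ?acts_rcosets.
have KF : val K \in F.
  rewrite inE; apply/andP; split; first by apply/rcosetsP; exists 1; rewrite ?inE ?rcoset1.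
  by apply/afixP => a _; rewrite /= -{1}(rcoset1 K) act_rcoset rcoset_id ?K_stable.
have /subsetPn [B FB BK] : ~~ (F \subset [set val K]).
  apply/negP => /subset_leq_card; rewrite cards1 => leF1.
  have F_gt0 : (0 < #|F|)%N by apply/card_gt0P; exists (val K).
  by move: (leq_trans (prime_gt1 p_pr) (dvdn_leq F_gt0 pF)); rewrite ltnNge leF1.
move: FB BK; rewrite inE => /andP [/rcosetsP [x _ ->] /afixP Bfix] BK.
exists x => [|a]; first by apply: contra BK => xK; rewrite inE rcoset_id.
by rewrite -mem_rcoset -(Bfix a) ?inE // act_rcoset rcoset_refl.
Qed.

End FixedCoset.

Lemma natr_Zp_add (R : pzRingType) (p : nat) (a b : 'Z_p) : (1 < p)%N ->
  exists k : R, (((a + b)%R : 'Z_p) : nat)%:R = (a : nat)%:R + (b : nat)%:R + p%:R * k.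
Proof.
move=> p_gt1; exists (- (((a + b) %/ p)%N)%:R).
have -> : (((a + b)%R : 'Z_p) : nat) = ((a + b) %% p)%N.
  exact: (congr1 (modn (a + b)%N) (Zp_cast p_gt1)).
by rewrite -natrD {2}(divn_eq (a + b) p) natrD mulrN -natrM mulnC addrAC subrr add0r.
Qed.

(* Modulo [M], the [Z/p]-combinations of the translates [h v] form a finite
   [p]-group, the quotient of [coeffs] by [combination_kernel], on which [gT]
   acts by translation. *)
Section FixedPoint.
Variables (R : pzRingType) (gT : finGroupType) (p : nat).
Hypotheses (p_pr : prime p) (pg : (p.-group [set: gT])%g).
Variable M : gring R gT -> Prop.
Hypotheses (LM : left_ideal M) (Mp : M p%:R).
Variable v : gring R gT.

Definition coeffs := {ffun gT -> 'Z_p}.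
HB.instance Definition _ := GRing.Zmodule.on coeffs.
HB.instance Definition _ := Finite.on coeffs.
HB.instance Definition _ := [finGroupMixin of coeffs for +%R].

Definition combination (c : coeffs) : gring R gT :=
  \sum_h gconst ((c h : nat)%:R) * (gelem h * v).

Lemma combinationD c d : M (combination (c + d) - (combination c + combination d)).
Proof.
rewrite /combination -big_split -sumrB /=; apply: left_ideal_sum => // h.
rewrite ffunE; have [k ->] := natr_Zp_add R (c h) (d h) (prime_gt1 p_pr).
rewrite -mulrDl -mulrBl -(rmorphD gconst) -(rmorphB gconst) [_ + p%:R * k]addrC addrK.
rewrite rmorphM rmorph_nat -mulrA -commr_nat.
exact: left_idealM.
Qed.

Lemma combination0 : combination 0 = 0.
Proof. by rewrite /combination big1 // => h _; rewrite ffunE rmorph0 mul0r. Qed.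

Definition combination_kernel : {set coeffs} :=
  [set c | boolp.asbool (M (combination c))].

Lemma in_combination_kernel c : c \in combination_kernel <-> M (combination c).
Proof. by rewrite inE; split => /boolp.asboolP. Qed.

Lemma combination_kernel_group : group_set combination_kernel.
Proof.
apply/group_setP; split.
  by apply/in_combination_kernel; rewrite combination0; case: LM.
move=> c d /in_combination_kernel Mc /in_combination_kernel Md; apply/in_combination_kernel.
by have := left_idealD LM (combinationD c d) (left_idealD LM Mc Md); rewrite subrK.
Qed.

Definition translate (c : coeffs) (g : gT) : coeffs := [ffun h => c (g * h)%g].

Lemma translate1 : translate^~ 1%g =1 id.
Proof. by move=> c; apply/ffunP => h; rewrite ffunE mul1g. Qed.

Lemma translateM c : act_morph translate c.
Proof. by move=> a b; apply/ffunP => h; rewrite !ffunE mulgA. Qed.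

Definition translate_action := TotalAction translate1 translateM.

Lemma combination_translate c g :
  combination (translate c g) = gelem g^-1%g * combination c.
Proof.
rewrite /combination mulr_sumr [RHS](reindex_inj (mulgI g)) /=; apply: eq_bigr => h _.
by rewrite ffunE !mulrA -gconst_gelemC -[_ * gelem _ * gelem _]mulrA gelemM mulKg.
Qed.

Lemma left_ideal_fixed_point : ~ M v ->
  exists v0, ~ M v0 /\ forall g, M (gelem g * v0 - v0).
Proof.
move=> nMv; pose K := Group combination_kernel_group.
have pg_coeffs : (p.-group [set: coeffs])%g.
  by rewrite /pgroup cardsT card_ffun card_ord (Zp_cast (prime_gt1 p_pr)) pnatX pnat_id.
have K_proper : ~~ ([set: coeffs] \subset K).
  pose c1 : coeffs := [ffun h => if h == 1%g then 1 else 0].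
  have c1v : combination c1 = v.
    rewrite /combination (bigD1 1%g) //= big1 => [|h /negbTE h1]; last first.
      by rewrite ffunE h1 rmorph0 mul0r.
    by rewrite ffunE eqxx rmorph1 gelem1 !mul1r addr0.
  apply/subsetPn; exists c1; rewrite ?in_setT //.
  by apply/negP => /in_combination_kernel; rewrite c1v.
have translate_morph x y a : translate (x * y)%g a = (translate x a * translate y a)%g.
  by apply/ffunP => h; rewrite !ffunE.
have K_stable x a : x \in K -> translate x a \in K.
  move=> /in_combination_kernel Mx; apply/in_combination_kernel.
  by rewrite combination_translate; apply: left_idealM.
have [c cK c_fixed] := exists_fixed_rcoset (to := translate_action) p_pr pg pg_coeffs
  translate_morph K_stable K_proper.
exists (combination c); split=> [Mc | g].
  by move/negP: cK; apply; exact/in_combination_kernel.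
have /in_combination_kernel Md : translate c g^-1 - c \in K by exact: c_fixed.
have := combinationD (translate c g^-1 - c) c; rewrite subrK combination_translate invgK.
by move/(left_idealD LM)/(_ Md); rewrite opprD addrA addrAC subrK.
Qed.

End FixedPoint.

Lemma augment0_mul_fixed (R : pzRingType) (gT : finGroupType) (M : gring R gT -> Prop)
    (v0 z : gring R gT) :
  left_ideal M -> (forall g, M (gelem g * v0 - v0)) -> augment z = 0 -> M (z * v0).
Proof.
move=> LM Mv0 z0.
have -> : z * v0 = \sum_g gconst (z g) * (gelem g * v0 - v0) + gconst (augment z) * v0.
  rewrite /augment rmorph_sum mulr_suml -big_split /= {1}(gring_decomp z) mulr_suml.
  by apply: eq_bigr => g _; rewrite mulrBr subrK mulrA.
by rewrite z0 rmorph0 mul0r addr0; apply: left_ideal_sum => // g; apply: left_idealM.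
Qed.

Section AugmentationUnits.
Variables (R : pzRingType) (gT : finGroupType) (p : nat).
Hypotheses (p_pr : prime p) (pg : (p.-group [set: gT])%g) (Jp : jacobson (p%:R : R)).

Lemma gring_left_quasi_regular_natr (q : gring R gT) : exists a, a * (1 - p%:R * q) = 1.
Proof.
suff [a /esym] : left_multiples (1 - p%:R * q) 1 by exists a.
have := nakayama_left_ideal (c := gconst) (gen := gelem) (j := p%:R)
  (left_ideal_multiples (1 - p%:R * q)).
apply.
- by move=> r; have [u [_ hu]] := jacobson_unit Jp r; exists u; rewrite -commr_nat.
- move=> z; exists (z * (1 - p%:R * q)), (z * q); split; first by exists z.
  by rewrite rmorph_nat mulrBr mulr1 [z * (_ * q)]mulrA (commr_nat z) -mulrA subrK.
- move=> z; exists 0, (fun g => z g); split; first by exists 0; rewrite mul0r.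
  by rewrite add0r {1}(gring_decomp z).
Qed.

Lemma augment0_left_inv (w : gring R gT) : augment w = 0 -> exists a, a * (1 - w) = 1.
Proof.
move=> w0; apply: boolp.contrapT => /not_left_invertible_maximal [M [MM Mw]].
have [LM nM1 _] := MM.
have Mp : M p%:R.
  apply: boolp.contrapT => /(maximal_left_ideal_cover MM) [m [s [Mm e]]].
  have [a ea] := gring_left_quasi_regular_natr s; apply: nM1; rewrite -ea.
  by apply: left_idealM => //; rewrite -commr_nat {1}e addrK.
have [v0 [nMv0 Mv0]] := left_ideal_fixed_point p_pr pg LM Mp nM1.
have [m [t [Mm e]]] := maximal_left_ideal_cover MM nMv0.
apply: nM1; have -> : 1 = (1 - w) + (w * m + (w * t) * v0).
  by rewrite -mulrA -mulrDr -e mulr1 subrK.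
apply: left_idealD => //; apply: left_idealD => //; first exact: left_idealM.
by apply: augment0_mul_fixed => //; rewrite rmorphM /= w0 mul0r.
Qed.

Lemma augment_left_inv (y : gring R gT) : is_unit (augment y) -> exists b, b * y = 1.
Proof.
move=> [c [_ cy]].
have [a ea] : exists a, a * (1 - (1 - gconst c * y)) = 1.
  by apply: augment0_left_inv; rewrite rmorphB rmorph1 rmorphM /= augment_const cy subrr.
by exists (a * gconst c); rewrite -mulrA -ea subKr.
Qed.

Lemma augment_unit (y : gring R gT) : is_unit (augment y) -> is_unit y.
Proof.
move=> uy; have [b by1] := augment_left_inv uy.
have ub : is_unit (augment b).
  have [c [yc cy]] := uy.
  have -> : augment b = c by rewrite -[LHS]mulr1 -yc mulrA -rmorphM by1 rmorph1 mul1r.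
  by exists (augment y).
have [b' b'b] := augment_left_inv ub.
have yb' : y = b' by rewrite -[b']mulr1 -by1 mulrA b'b mul1r.
by exists b; rewrite {1}yb'.
Qed.

End AugmentationUnits.

Section FiniteSubgroups.
Variables (G : choiceType) (gmul : G -> G -> G) (gone : G) (ginv : G -> G).

Record fin_subgroup := FinSubgroup {
  fsg_elems : seq G;
  fsg_uniq : uniq fsg_elems;
  fsg_one : gone \in fsg_elems;
  fsg_mul : forall x y, x \in fsg_elems -> y \in fsg_elems -> gmul x y \in fsg_elems;
  fsg_inv : forall x, x \in fsg_elems -> ginv x \in fsg_elems }.

Lemma locally_finite_fin_subgroup : locally_finite gmul gone ginv ->
  forall s : seq G, exists T : fin_subgroup, {subset s <= fsg_elems T}.
Proof.
move=> lf s; have [t0 t0H] := lf s; pose H := gen_subgroup gmul gone ginv s.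
pose t := undup [seq y <- t0 | boolp.asbool (H y)].
have tP y : y \in t <-> H y.
  rewrite mem_undup mem_filter; split=> [/andP [/boolp.asboolP //]|Hy].
  by rewrite t0H // andbT; apply/boolp.asboolP.
have t1 : gone \in t by apply/tP => K [].
have tM x y : x \in t -> y \in t -> gmul x y \in t.
  move=> /tP Hx /tP Hy; apply/tP => K KS Ks; case: (KS) => _ KM _.
  by apply: KM; [exact: Hx | exact: Hy].
have tV x : x \in t -> ginv x \in t.
  by move=> /tP Hx; apply/tP => K KS Ks; case: (KS) => _ _ KV; apply: KV; exact: Hx.
by exists (FinSubgroup (undup_uniq _) t1 tM tV) => y ys; apply/tP => K _; apply.
Qed.

End FiniteSubgroups.

Lemma gr_addE (R : pzRingType) (G : choiceType) (a b : grpring R G) g :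
  gr_add a b g = a g + b g.
Proof.
rewrite /gr_add fsfunE; case: ifP => // /negbT.
by rewrite in_fsetU negb_or => /andP [ag bg]; rewrite !fsfun_dflt // addr0.
Qed.

Lemma gr_mulE (R : pzRingType) (G : choiceType) (gmul : G -> G -> G)
    (a b : grpring R G) g :
  gr_mul gmul a b g =
    \sum_(h <- finsupp a) \sum_(k <- finsupp b | gmul h k == g) a h * b k.
Proof.
rewrite /gr_mul fsfunE; case: ifP => // /negbT gn.
rewrite big1_seq // => h /andP [_ ha]; rewrite big1_seq // => k /andP [/eqP hkg kb].
by case/negP: gn; rewrite -hkg; apply: in_imfset2.
Qed.

Section SubgroupRing.
Variables (R : pzRingType) (G : choiceType) (gmul : G -> G -> G) (gone : G) (ginv : G -> G).
Hypothesis grp : is_group gmul gone ginv.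
Variable T : fin_subgroup gmul gone ginv.
Local Notation t := (fsg_elems T).

Definition subgrp := seq_sub t.
HB.instance Definition _ := Finite.on subgrp.

Definition subgrp_mul (a b : subgrp) : subgrp := SeqSub (fsg_mul (ssvalP a) (ssvalP b)).
Definition subgrp_one : subgrp := SeqSub (fsg_one T).
Definition subgrp_inv (a : subgrp) : subgrp := SeqSub (fsg_inv (ssvalP a)).

Lemma subgrp_mulA : associative subgrp_mul.
Proof. by move=> a b c; apply: val_inj; case: grp => mulA _ _ _ _; apply: mulA. Qed.

Lemma subgrp_mul1 : left_id subgrp_one subgrp_mul.
Proof. by move=> a; apply: val_inj; case: grp => _ mul1 _ _ _; apply: mul1. Qed.

Lemma subgrp_mulV : left_inverse subgrp_one subgrp_inv subgrp_mul.
Proof. by move=> a; apply: val_inj; case: grp => _ _ _ mulV _; apply: mulV. Qed.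

HB.instance Definition _ := Finite_isGroup.Build subgrp subgrp_mulA subgrp_mul1 subgrp_mulV.

Lemma val_subgrpM (a b : subgrp) : val (a * b)%g = gmul (val a) (val b).
Proof. by []. Qed.

Lemma val_subgrp_expg (h : subgrp) n : val (h ^+ n)%g = gpow gmul gone (val h) n.
Proof. by elim: n => [|n IH] //; rewrite expgS /= IH. Qed.

Lemma pgroup_subgrp p : prime p -> p_group gmul gone p -> (p.-group [set: subgrp])%g.
Proof.
move=> p_pr pg; apply/pgroupP => q q_pr /Cauchy [] // h _ oh.
have [n hn] := pg (val h).
have : (q %| p ^ n)%N by rewrite -oh order_dvdn; apply/eqP/val_inj; rewrite val_subgrp_expg.
by rewrite Euclid_dvdX // (dvdn_prime2 q_pr p_pr) inE => /andP [].
Qed.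

Local Notation RH := (gring R subgrp).
Local Notation RG := (grpring R G).

Definition embed (a : RH) : RG :=
  [fsfun g in seq_fset tt t => a (insubd (1 : subgrp)%g g) | 0].
Definition restrict (b : RG) : RH := [ffun h => b (val h)].

Lemma embedE a g : embed a g = if g \in t then a (insubd (1 : subgrp)%g g) else 0.
Proof. by rewrite /embed fsfunE seq_fsetE. Qed.

Lemma embed_val a h : embed a (val h) = a h.
Proof. by rewrite embedE (valP h) valKd. Qed.

Lemma embed_inj : injective embed.
Proof. by move=> a b eab; apply/ffunP => h; rewrite -!embed_val eab. Qed.

Lemma restrictK b : {subset finsupp b <= t} -> embed (restrict b) = b.
Proof.
move=> bt; apply/fsfunP => g; rewrite embedE.
case: ifPn => [gt|gt]; first by rewrite ffunE insubdK.
by rewrite fsfun_dflt // (contra (bt g) gt).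
Qed.

Lemma embedD a b : embed (a + b) = gr_add (embed a) (embed b).
Proof. by apply/fsfunP => g; rewrite gr_addE !embedE; case: ifP; rewrite ?addr0 ?ffunE. Qed.

Lemma embed1 : embed 1 = gr_one R gone.
Proof.
apply/fsfunP => g; rewrite /gr_one [RHS]fsfunE in_fset1 embedE gring_oneE.
case: ifPn => [gt|]; first by rewrite -(inj_eq val_inj) insubdK //; case: eqP.
by case: eqP => // ->; rewrite fsg_one.
Qed.

Lemma sum_subgrp (F : G -> R) : \sum_(h : subgrp) F (val h) = \sum_(y <- t) F y.
Proof.
rewrite -(big_map val xpredT F) (perm_big t) //; apply: uniq_perm.
- by rewrite map_inj_uniq ?index_enum_uniq //; apply: val_inj.
- exact: fsg_uniq.
move=> y; apply/mapP/idP => [[h _ ->]|yt]; first exact: valP.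
by exists (SeqSub yt); rewrite ?mem_index_enum.
Qed.

Lemma sum_finsupp (b : RG) (F : G -> R) : {subset finsupp b <= t} ->
  (forall y, b y = 0 -> F y = 0) -> \sum_(y <- finsupp b) F y = \sum_(y <- t) F y.
Proof.
move=> bt F0; rewrite [RHS](bigID (mem (finsupp b))) /= [X in _ + X]big1_seq ?addr0.
  rewrite -[RHS]big_filter; apply: perm_big; apply: uniq_perm; first exact: fset_uniq.
    by rewrite filter_uniq // fsg_uniq.
  by move=> y; rewrite mem_filter andb_idr // => /bt.
by move=> y /andP [yb _]; apply/F0/fsfun_dflt.
Qed.

Lemma embedM a b : embed (a * b) = gr_mul gmul (embed a) (embed b).
Proof.
have embed_supp c : {subset finsupp (embed c) <= t}.
  by move=> g; rewrite mem_finsupp embedE; case: ifP; rewrite ?eqxx.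
apply/fsfunP => g; rewrite gr_mulE (sum_finsupp (embed_supp a)) => [|y ->]; last first.
  by rewrite big1 // => k _; rewrite mul0r.
rewrite -sum_subgrp.
under eq_bigr => h _.
  rewrite big_mkcond /= (sum_finsupp (embed_supp b)) => [|y ->]; last first.
    by rewrite mulr0 if_same.
  rewrite -sum_subgrp embed_val.
  over.
rewrite embedE; case: ifPn => gt; last first.
  rewrite big1 // => h _; rewrite big1 // => k _.
  by case: eqP => // hkg; case/negP: gt; rewrite -hkg (fsg_mul (valP h) (valP k)).
rewrite gring_mulE; apply: eq_bigr => h _.
rewrite (bigD1 (h^-1 * insubd (1 : subgrp) g)%g) // big1 => [|k kn].
  by rewrite -val_subgrpM mulKVg insubdK // eqxx embed_val Monoid.mulm1.
rewrite -val_subgrpM -{1}(insubdK (1 : subgrp)%g gt) (inj_eq val_inj).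
by case: eqP => // hkg; case/negP: kn; rewrite -hkg mulKg.
Qed.

Lemma embed_is_unit a : is_unit a -> gr_is_unit gmul gone (embed a).
Proof. by case=> b [ab ba]; exists (embed b); rewrite -!embedM ab ba embed1. Qed.

Lemma restrict_is_unit u v : {subset finsupp u <= t} -> {subset finsupp v <= t} ->
    gr_mul gmul u v = gr_one R gone -> gr_mul gmul v u = gr_one R gone ->
  is_unit (restrict u).
Proof.
move=> ut vt uv vu; exists (restrict v).
by split; apply: embed_inj; rewrite embedM !restrictK // embed1.
Qed.

Lemma gr_is_unit_add_Delta p (x u v : RG) :
    prime p -> jacobson (p%:R : R) -> p_group gmul gone p ->
    (forall g, Delta (x g)) -> {subset finsupp x <= t} ->
    {subset finsupp u <= t} -> {subset finsupp v <= t} ->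
    gr_mul gmul u v = gr_one R gone -> gr_mul gmul v u = gr_one R gone ->
  gr_is_unit gmul gone (gr_add x u).
Proof.
move=> p_pr Jp pg Dx xt ut vt uv vu.
rewrite -(restrictK xt) -(restrictK ut) -embedD; apply: embed_is_unit.
apply: (augment_unit p_pr (pgroup_subgrp p_pr pg) Jp); rewrite rmorphD /=.
have -> : augment (restrict x) = \sum_(h : subgrp) x (val h).
  by apply: eq_bigr => h _; rewrite ffunE.
apply: (Delta_sum _ (fun h => Dx (val h))).
exact: is_unit_rmorph (restrict_is_unit ut vt uv vu).
Qed.

End SubgroupRing.

Theorem lemma3p5 (R : pzRingType) (p : nat) (G : choiceType)
  (gmul : G -> G -> G) (gone : G) (ginv : G -> G) :
  prime p ->
  jacobson (p%:R : R) ->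
  is_group gmul gone ginv ->
  locally_finite gmul gone ginv ->
  p_group gmul gone p ->
  forall x : grpring R G, (forall g : G, Delta (x g)) -> gr_Delta gmul gone x.
Proof.
move=> p_pr Jp grp lf pg x Dx u [v [uv vu]].
have [T sT] := locally_finite_fin_subgroup lf
  (enum_fset (finsupp x) ++ enum_fset (finsupp u) ++ enum_fset (finsupp v)).
by apply: (gr_is_unit_add_Delta grp (T := T) p_pr Jp pg Dx _ _ _ uv vu) => g gb;
  apply: sT; rewrite !mem_cat gb ?orbT.
Qed.
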